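(* The maps $(\lambda,\mu)\mapsto z(\lambda,\mu)$, with inverse $\lambda=\frac{z_0-z_1}{z_2-1}=\frac{z_2+1}{z_0+z_1}$, $\mu=\frac{z_0-z_1}{z_2+1}=\frac{z_2-1}{z_0+z_1}$, define biholomorphic mappings from the tubes $\tau^{-,+}$ and $\tau^{+,-}$ onto $\mathcal T^+$ and $\mathcal T^-$ respectively, and from the pierced tubes $\tau^{+,+}\setminus\delta$ and $\tau^{-,-}\setminus\delta$ onto $\mathcal T_\leftarrow$ and $\mathcal T_\rightarrow$ respectively, where $\delta=\{(\lambda,\mu):\lambda=\mu\}$.
   Context: $[z\cdot z']=z_0z'_0-z_1z'_1-z_2z'_2$ on $\mathbb C^3$, $z^2=[z\cdot z]$; $X^{(c)}=\{z\in\mathbb C^3:z^2=-1\}$, $z=x+iy$; $V^+=\{y:y^2>0,y_0>0\}$, $V^-=-V^+$; $\mathcal T^\pm=\{z\in X^{(c)}:y\in V^\pm\}$; fix $e\in V^+$; $\mathcal T_\rightarrow=\{z\in X^{(c)}:y^2<0,{\rm sgn}\det(e,x,y)=-1\}$, $\mathcal T_\leftarrow$ the same with $+1$. For $(\lambda,\mu)\in\mathbb C^2$, $\lambda\ne\mu$: $z(\lambda,\mu)=\big(\frac{1+\lambda\mu}{\lambda-\mu},\frac{1-\lambda\mu}{\lambda-\mu},\frac{\lambda+\mu}{\lambda-\mu}\big)$. For signs $\varepsilon,\varepsilon'$: $\tau^{\varepsilon,\varepsilon'}=\{(\lambda,\mu)\in\mathbb C^2:\varepsilon{\rm Im}\lambda>0,\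 \varepsilon'{\rm Im}\mu>0\}$. *)

From HB Require Import structures.
From mathcomp Require Import all_boot all_order all_algebra.
From mathcomp Require Import all_classical all_reals all_analysis.
From mathcomp.real_closed Require Import complex.
Import Order.TTheory GRing.Theory Num.Theory.
Import numFieldNormedType.Exports.
Local Open Scope ring_scope.
Local Open Scope classical_set_scope.
Local Open Scope complex_scope.

Set Implicit Arguments. Unset Strict Implicit. Unset Printing Implicit Defensive.

(* The complex numbers over a real field R, viewed as a normed module over
   themselves (so that differentiability over C = holomorphy). *)
Notation CC R := ((R[i])^o).
Notation C2 R := (CC R * CC R)%type.
Notation C3 R := (CC R * CC R * CC R)%type.

Section Defs.
Variable R : realType.

Definition c0 (z : C3 R) : R[i] := z.1.1.
Definition c1 (z : C3 R) : R[i] := z.1.2.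
Definition c2 (z : C3 R) : R[i] := z.2.

Definition mink (z z' : C3 R) : R[i] :=
  c0 z * c0 z' - c1 z * c1 z' - c2 z * c2 z'.

Definition minkR (y y' : 'rV[R]_3) : R :=
  y 0 0 * y' 0 0 - y 0 1 * y' 0 1 - y 0 2%:R * y' 0 2%:R.

Definition reV (z : C3 R) : 'rV[R]_3 :=
  \row_(j < 3) complex.Re (if j == 0 then c0 z else if j == 1 then c1 z else c2 z).
Definition imV (z : C3 R) : 'rV[R]_3 :=
  \row_(j < 3) complex.Im (if j == 0 then c0 z else if j == 1 then c1 z else c2 z).

Definition Xc : set (C3 R) := [set z | mink z z = -1].

Definition Vplus : set 'rV[R]_3 := [set y | 0 < minkR y y /\ 0 < y 0 0].
Definition Vminus : set 'rV[R]_3 := [set y | Vplus (- y)].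

Definition Tplus : set (C3 R) := [set z | Xc z /\ Vplus (imV z)].
Definition Tminus : set (C3 R) := [set z | Xc z /\ Vminus (imV z)].

Definition det3 (e x y : 'rV[R]_3) : R :=
  \det (\matrix_(i < 3, j < 3)
          (if i == 0 then e 0 j else if i == 1 then x 0 j else y 0 j)).

Definition Tright (e : 'rV[R]_3) : set (C3 R) :=
  [set z | Xc z /\ minkR (imV z) (imV z) < 0 /\
           Num.sg (det3 e (reV z) (imV z)) = -1].
Definition Tleft (e : 'rV[R]_3) : set (C3 R) :=
  [set z | Xc z /\ minkR (imV z) (imV z) < 0 /\
           Num.sg (det3 e (reV z) (imV z)) = 1].

Definition zmap (w : C2 R) : C3 R :=
  let l : R[i] := w.1 in let m : R[i] := w.2 in
  ((((1 + l * m) / (l - m) : R[i]) : CC R,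
    ((1 - l * m) / (l - m) : R[i]) : CC R),
   ((l + m) / (l - m) : R[i]) : CC R).

Definition zinv (z : C3 R) : C2 R :=
  (((c0 z - c1 z) / (c2 z - 1) : R[i]) : CC R,
   ((c0 z - c1 z) / (c2 z + 1) : R[i]) : CC R).

(* tubes tau^{eps,eps'} in C^2; eps = true means "+" *)
Definition sgn (b : bool) : R := if b then 1 else -1.
Definition tau (eps eps' : bool) : set (C2 R) :=
  [set w | 0 < sgn eps * complex.Im (w.1 : R[i]) /\ 0 < sgn eps' * complex.Im (w.2 : R[i])].

Definition delta : set (C2 R) := [set w | (w.1 : R[i]) = w.2].

Definition holomorphic_on {V W : normedModType (CC R)} (D : set V) (f : V -> W) :=
  open D /\ forall x, D x -> differentiable f x.

Definition holomorphic_on_sub {W : normedModType (CC R)} (E : set (C3 R))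
    (g : C3 R -> W) :=
  forall z, E z -> exists U : set (C3 R), [/\ open U, U z &
     exists G : C3 R -> W, (forall u, U u -> differentiable G u) /\
                           (forall u, U u -> E u -> G u = g u)].

Definition biholomorphic (D : set (C2 R)) (E : set (C3 R))
    (f : C2 R -> C3 R) (g : C3 R -> C2 R) :=
  [/\ forall w, D w -> E (f w),
      forall z, E z -> D (g z) /\ f (g z) = z,
      forall w, D w -> g (f w) = w,
      holomorphic_on D f &
      holomorphic_on_sub E g].

End Defs.

From HB Require Import structures.
From mathcomp Require Import all_boot all_order all_algebra.
From mathcomp Require Import all_classical all_reals all_analysis.
From mathcomp.real_closed Require Import complex.
From mathcomp Require Import ring lra.
Import Order.TTheory GRing.Theory Num.Theory.
Import numFieldNormedType.Exports.
Local Open Scope ring_scope.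
Local Open Scope classical_set_scope.
Set Implicit Arguments. Unset Strict Implicit. Unset Printing Implicit Defensive.

(* Put D = |λ - μ|^2 and x + i y = z(λ, μ).  Direct computation gives
     y^2 D = -4 Im λ Im μ   and   (y0 + y1) D = 2 (Im μ - Im λ),
   so z(λ, μ) lies in T^+ (resp. T^-) exactly when Im λ < 0 < Im μ (resp. the reverse).
   When y^2 < 0, the equations [x.y] = 0 and x^2 = y^2 - 1 of X^(c) make the Euclidean
   cross product x × y timelike (Lagrange's identity), so det(e, x, y) = e . (x × y) has
   the sign of (x × y)_0 for every e in V^+, and (x × y)_0 D = Im λ (1 + |μ|^2) +
   Im μ (1 + |λ|^2); this describes T_<- and T_->.  On X^(c), y^2 <> 0 forces the four
   factors of (z0 - z1)(z0 + z1) = (z2 - 1)(z2 + 1) to be nonzero, which is what makes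
   both formulas for the inverse defined, equal, holomorphic and inverse to z. *)

Section ConeSigns.
Variable F : realFieldType.

Lemma sgr_timelike_pairing (e0 e1 e2 m0 m1 m2 : F) :
  0 < e0 -> 0 < e0 * e0 - e1 * e1 - e2 * e2 -> 0 < m0 * m0 - m1 * m1 - m2 * m2 ->
  Num.sg (e0 * m0 + e1 * m1 + e2 * m2) = Num.sg m0.
Proof.
move=> e0_gt0 e_timelike m_timelike.
(* |e1 m1 + e2 m2|^2 <= (e1^2 + e2^2) (m1^2 + m2^2) < e0^2 m0^2, so e0 m0 dominates. *)
have cauchy_schwarz : (e1 * m1 + e2 * m2) ^+ 2 <= (e1 * e1 + e2 * e2) * (m1 * m1 + m2 * m2).
  by have := sqr_ge0 (e1 * m2 - e2 * m1); nra.
have e_spatial : 0 <= (e0 * e0 - e1 * e1 - e2 * e2) * (m1 * m1 + m2 * m2).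
  by rewrite mulr_ge0 ?(ltW e_timelike) // addr_ge0 // -expr2 sqr_ge0.
have m_scaled : 0 < (e0 * e0) * (m0 * m0 - m1 * m1 - m2 * m2) by rewrite mulr_gt0 ?mulr_gt0.
have [m0_lt0|m0_gt0|m0_eq0] := ltrgtP m0 0.
- rewrite (ltr0_sg m0_lt0) ltr0_sg //.
  have e0m0_lt0 : e0 * m0 < 0 by nra.
  nra.
- rewrite (gtr0_sg m0_gt0) gtr0_sg //.
  have e0m0_gt0 : 0 < e0 * m0 by nra.
  nra.
- by move: m_timelike; rewrite m0_eq0; have := sqr_ge0 m1; have := sqr_ge0 m2; nra.
Qed.

Lemma future_cone_iff (y0 y1 y2 b d D : F) : 0 < D ->
  (y0 * y0 - y1 * y1 - y2 * y2) * D = -4 * b * d -> (y0 + y1) * D = 2 * (d - b) ->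
  (0 < y0 * y0 - y1 * y1 - y2 * y2 /\ 0 < y0) <-> (b < 0 /\ 0 < d).
Proof.
move=> D_gt0 qE sE; split=> [[q_gt0 y0_gt0]|[b_lt0 d_gt0]].
  have bd_lt0 : b * d < 0 by nra.
  have y01_gt0 : 0 < y0 + y1 by nra.
  have b_lt_d : b < d by nra.
  split; nra.
have q_gt0 : 0 < y0 * y0 - y1 * y1 - y2 * y2 by nra.
have y01_gt0 : 0 < y0 + y1 by nra.
split=> //; nra.
Qed.

Lemma past_cone_iff (y0 y1 y2 b d D : F) : 0 < D ->
  (y0 * y0 - y1 * y1 - y2 * y2) * D = -4 * b * d -> (y0 + y1) * D = 2 * (d - b) ->
  (0 < y0 * y0 - y1 * y1 - y2 * y2 /\ y0 < 0) <-> (0 < b /\ d < 0).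
Proof.
move=> D_gt0 qE sE.
have qE' : (- y0 * - y0 - - y1 * - y1 - - y2 * - y2) * D = -4 * - b * - d.
  by rewrite !mulrNN qE; ring.
have sE' : (- y0 + - y1) * D = 2 * (- d - - b) by rewrite -opprD mulNr sE; ring.
by have := future_cone_iff D_gt0 qE' sE'; rewrite !mulrNN !oppr_gt0 oppr_lt0.
Qed.

Lemma spacelike_iff (q n b d D A B : F) : 0 < D -> 0 < A -> 0 < B ->
  q * D = -4 * b * d -> n * D = b * A + d * B ->
  (q < 0 /\ 0 < n) <-> (0 < b /\ 0 < d).
Proof.
move=> D_gt0 A_gt0 B_gt0 qE nE; split=> [[q_lt0 n_gt0]|[b_gt0 d_gt0]]; last by split; nra.
have bd_gt0 : 0 < b * d by nra.
have bAdB_gt0 : 0 < b * A + d * B by nra.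
have [b_lt0|b_gt0|b_eq0] := ltrgtP b 0.
- have d_lt0 : d < 0 by nra.
  have bA_lt0 : b * A < 0 by nra.
  have dB_lt0 : d * B < 0 by nra.
  lra.
- by split=> //; nra.
- by move: bd_gt0; rewrite b_eq0 mul0r ltxx.
Qed.

Lemma spacelike_neg_iff (q n b d D A B : F) : 0 < D -> 0 < A -> 0 < B ->
  q * D = -4 * b * d -> n * D = b * A + d * B ->
  (q < 0 /\ n < 0) <-> (b < 0 /\ d < 0).
Proof.
move=> D_gt0 A_gt0 B_gt0 qE nE.
have qE' : q * D = -4 * - b * - d by rewrite qE; ring.
have nE' : - n * D = - b * A + - d * B by rewrite mulNr nE; ring.
by have := spacelike_iff D_gt0 A_gt0 B_gt0 qE' nE'; rewrite !oppr_gt0.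
Qed.
End ConeSigns.

(* Determinant expansion and the index arithmetic in [cross] produce ordinals of 'I_3
   that are equal but not syntactically 0, 1 or 2%:R; [canonical_rv3_entries] rewrites
   every entry [v i j] of a row vector to one of these three indices, so that [ring]
   sees equal atoms. *)
Ltac canonical_ord3 j :=
  let k := eval compute in (nat_of_ord j) in
  match k with
  | 0%N => constr:(0 : 'I_3) | 1%N => constr:(1 : 'I_3) | 2%N => constr:(2%:R : 'I_3)
  end.

Ltac canonical_rv3_entries :=
  repeat match goal with
  | |- context [@fun_of_matrix ?T 1 3 ?v ?i ?j] =>
    let j' := canonical_ord3 j in
    tryif constr_eq j j' then fail
    else have -> : v i j = v i j' by congr (v _ _); apply: val_inj
  end.

Section Tubes.
Variable R : realType.
Local Notation Re := (@complex.Re R).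
Local Notation Im := (@complex.Im R).

Definition cross (x y : 'rV[R]_3) : 'rV[R]_3 :=
  \row_(j < 3) (x 0 (j + 1) * y 0 (j + 2%:R) - x 0 (j + 2%:R) * y 0 (j + 1)).

Lemma det3E (e x y : 'rV[R]_3) :
  det3 e x y = e 0 0 * cross x y 0 0 + e 0 1 * cross x y 0 1 + e 0 2%:R * cross x y 0 2%:R.
Proof.
rewrite /det3 (expand_det_row _ 0) !big_ord_recr big_ord0 /= add0r /cofactor.
rewrite !(expand_det_row _ 0) !big_ord_recr big_ord0 /= !add0r /cofactor.
rewrite !det_mx11 !big_ord0 !mxE /=.
canonical_rv3_entries; ring.
Qed.

Lemma minkR_cross (x y : 'rV[R]_3) :
  minkR (cross x y) (cross x y) = minkR x x * minkR y y - minkR x y ^+ 2.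
Proof. rewrite /minkR !mxE; canonical_rv3_entries; ring. Qed.

Lemma differentiable_fst (V W : normedModType (CC R)) (x : V * W) :
  differentiable (@fst V W) x.
Proof.
apply: (@linear_differentiable (CC R) _ _ (@fst V W : {linear (V * W)%type -> V}) x).
by move=> y; exact: cvg_fst.
Qed.

Lemma differentiable_snd (V W : normedModType (CC R)) (x : V * W) :
  differentiable (@snd V W) x.
Proof.
apply: (@linear_differentiable (CC R) _ _ (@snd V W : {linear (V * W)%type -> W}) x).
by move=> y; exact: cvg_snd.
Qed.

Lemma continuous_Im : continuous (fun z : CC R => complex.Im (z : R[i])).
Proof.
move=> z; have [_] := @cvgrPdist_lt R R^o (CC R) (nbhs z) _
  (fun z : CC R => complex.Im (z : R[i])) (complex.Im (z : R[i])).
apply=> eps eps0.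
apply/nbhs_ballP; exists eps%:C%C => /=; first by rewrite ltcR.
move=> t; rewrite -ball_normE /= normc_def ltcR; apply: le_lt_trans.
have -> : complex.Im (z - t) = complex.Im z - complex.Im t by case: z; case: t.
by rewrite -sqrtr_sqr ler_sqrt ?lerDr ?sqr_ge0 ?addr_ge0 ?sqr_ge0.
Qed.

Lemma open_neq_normed (V : normedModType (CC R)) (a : V) : open [set x : V | x != a].
Proof.
have -> : [set x : V | x != a] = ~` [set a] by apply/seteqP; split => x /= /eqP.
exact/closed_openC/accessible_closed_set1/hausdorff_accessible/norm_hausdorff.
Qed.

Lemma reV0 (z : C3 R) : reV z 0 0 = Re (c0 z). Proof. by rewrite mxE. Qed.
Lemma reV1 (z : C3 R) : reV z 0 1 = Re (c1 z). Proof. by rewrite mxE. Qed.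
Lemma reV2 (z : C3 R) : reV z 0 2%:R = Re (c2 z). Proof. by rewrite mxE. Qed.
Lemma imV0 (z : C3 R) : imV z 0 0 = Im (c0 z). Proof. by rewrite mxE. Qed.
Lemma imV1 (z : C3 R) : imV z 0 1 = Im (c1 z). Proof. by rewrite mxE. Qed.
Lemma imV2 (z : C3 R) : imV z 0 2%:R = Im (c2 z). Proof. by rewrite mxE. Qed.

Definition cdist2 (l m : R[i]) : R := (Re l - Re m) ^+ 2 + (Im l - Im m) ^+ 2.

Lemma cdist2_gt0 (l m : R[i]) : l != m -> 0 < cdist2 l m.
Proof.
case: l m => [a b] [c d] ne; rewrite /cdist2 /= lt0r addr_ge0 ?sqr_ge0 // andbT.
rewrite paddr_eq0 ?sqr_ge0 // !sqrf_eq0 !subr_eq0.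
by apply: contra ne => /andP[/eqP-> /eqP->].
Qed.

Lemma Xc_zmap (w : C2 R) : (w.1 : R[i]) != w.2 -> Xc (zmap w).
Proof.
case: w => l m /= ne; rewrite /Xc /mink /c0 /c1 /c2 /=.
have lm_neq0 : (l : R[i]) - m != 0 by rewrite subr_eq0.
by field.
Qed.

Lemma mink_imV_zmap (w : C2 R) : (w.1 : R[i]) != w.2 ->
  minkR (imV (zmap w)) (imV (zmap w)) * cdist2 w.1 w.2 = -4 * Im w.1 * Im w.2.
Proof.
move=> /cdist2_gt0; rewrite /minkR imV0 imV1 imV2 /cdist2.
case: w => [[a b] [c d]] /= /gt_eqF/negbT D_neq0.
by field.
Qed.

Lemma imV_zmap01 (w : C2 R) : (w.1 : R[i]) != w.2 ->
  (imV (zmap w) 0 0 + imV (zmap w) 0 1) * cdist2 w.1 w.2 = 2 * (Im w.2 - Im w.1).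
Proof.
move=> /cdist2_gt0; rewrite imV0 imV1 /cdist2.
case: w => [[a b] [c d]] /= /gt_eqF/negbT D_neq0.
by field.
Qed.

Lemma cross_zmap0 (w : C2 R) : (w.1 : R[i]) != w.2 ->
  cross (reV (zmap w)) (imV (zmap w)) 0 0 * cdist2 w.1 w.2 =
    Im w.1 * (1 + Re w.2 ^+ 2 + Im w.2 ^+ 2) + Im w.2 * (1 + Re w.1 ^+ 2 + Im w.1 ^+ 2).
Proof.
move=> /cdist2_gt0; rewrite mxE; canonical_rv3_entries.
rewrite reV1 reV2 imV1 imV2 /cdist2.
case: w => [[a b] [c d]] /= /gt_eqF/negbT D_neq0.
by field.
Qed.

Lemma zinv_zmap (w : C2 R) : (w.1 : R[i]) != w.2 -> (w.1 : R[i]) != 0 -> (w.2 : R[i]) != 0 ->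
  zinv (zmap w) = w.
Proof.
case: w => l m /= lm l_neq0 m_neq0; rewrite /zinv /c0 /c1 /c2 /=.
have lm_neq0 : (l : R[i]) - m != 0 by rewrite subr_eq0.
have two_neq0 : (2 : R[i]) != 0 by rewrite pnatr_eq0.
congr (_, _); field; rewrite lm_neq0 /=.
  by rewrite (_ : _ + _ = 2 * m) ?mulf_neq0 //; ring.
by rewrite (_ : _ + _ = 2 * l) ?mulf_neq0 //; ring.
Qed.

Lemma Xc_factor (z : C3 R) : Xc z -> (c0 z - c1 z) * (c0 z + c1 z) = (c2 z - 1) * (c2 z + 1).
Proof.
rewrite /Xc /mink => zXc.
transitivity (c0 z * c0 z - c1 z * c1 z - c2 z * c2 z + c2 z * c2 z); first ring.
by rewrite zXc; ring.
Qed.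

Lemma zmap_zinv (z : C3 R) : Xc z -> c0 z + c1 z != 0 -> c2 z - 1 != 0 -> c2 z + 1 != 0 ->
  zmap (zinv z) = z.
Proof.
move=> /Xc_factor; case: z => [[z0 z1] z2]; rewrite /zmap /zinv /c0 /c1 /c2 /=.
move=> fact s_neq0 p_neq0 q_neq0.
have a_neq0 : z0 - z1 != 0.
  by apply: contraNneq (mulf_neq0 p_neq0 q_neq0); rewrite -fact => ->; rewrite mul0r.
have two_neq0 : (2 : R[i]) != 0 by rewrite pnatr_eq0.
have d_neq0 : (z0 - z1) * (z2 + 1) + - (z0 - z1) * (z2 - 1) != 0.
  by rewrite (_ : _ + _ = 2 * (z0 - z1)) ?mulf_neq0 //; ring.
have nz := (a_neq0, p_neq0, q_neq0, d_neq0, two_neq0).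
congr (_, _, _).
- transitivity (((z2 - 1) * (z2 + 1) + (z0 - z1) ^+ 2) / (2 * (z0 - z1))).
    by field; rewrite ?nz.
  by rewrite -fact; field; rewrite ?nz.
- transitivity (((z2 - 1) * (z2 + 1) - (z0 - z1) ^+ 2) / (2 * (z0 - z1))).
    by field; rewrite ?nz.
  by rewrite -fact; field; rewrite ?nz.
- by field; rewrite ?nz.
Qed.

Lemma Xc_minkR (z : C3 R) : Xc z ->
  minkR (reV z) (reV z) - minkR (imV z) (imV z) = -1 /\ minkR (reV z) (imV z) = 0.
Proof.
rewrite /Xc /mink /minkR imV0 imV1 imV2 reV0 reV1 reV2 /c0 /c1 /c2.
by case: z => [[[a0 b0] [a1 b1]] [a2 b2]] /= [Re_eq Im_eq]; split; lra.
Qed.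

Lemma Xc_neq0 (z : C3 R) : Xc z -> minkR (imV z) (imV z) != 0 ->
  [/\ c0 z - c1 z != 0, c0 z + c1 z != 0, c2 z - 1 != 0 & c2 z + 1 != 0].
Proof.
move=> /Xc_factor fact y_nonnull.
have Im_c2 : (c2 z - 1) * (c2 z + 1) = 0 -> Im (c2 z) = 0.
  move/eqP; rewrite mulf_eq0 subr_eq0 addr_eq0 => /orP[] /eqP -> //=.
  by rewrite oppr0.
have pq_neq0 : (c2 z - 1) * (c2 z + 1) != 0.
  apply: contra y_nonnull => /eqP pq_eq0; move: (pq_eq0) => /Im_c2 Im2.
  move: pq_eq0; rewrite -fact => /eqP; rewrite mulf_eq0 subr_eq0 addr_eq0.
  rewrite /minkR imV0 imV1 imV2 Im2 mulr0 subr0.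
  by case/orP => /eqP ->; rewrite ?raddfN /= ?mulrNN subrr.
move: (pq_neq0); rewrite -fact !mulf_eq0 !negb_or => /andP[-> ->].
by move: pq_neq0; rewrite mulf_eq0 negb_or => /andP[-> ->].
Qed.

Lemma zinvE (z : C3 R) : Xc z -> minkR (imV z) (imV z) != 0 ->
  zinv z = (((c2 z + 1) / (c0 z + c1 z) : R[i]) : CC R,
            ((c2 z - 1) / (c0 z + c1 z) : R[i]) : CC R).
Proof.
move=> zXc y_nonnull; have [_ s_neq0 p_neq0 q_neq0] := Xc_neq0 zXc y_nonnull.
have fact := Xc_factor zXc.
by congr (_, _); apply/eqP; rewrite eqr_div //; apply/eqP; rewrite fact // mulrC.
Qed.

Lemma sgr_det3_Xc (e : 'rV[R]_3) (z : C3 R) : Vplus e -> Xc z ->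
  minkR (imV z) (imV z) < 0 ->
  Num.sg (det3 e (reV z) (imV z)) = Num.sg (cross (reV z) (imV z) 0 0).
Proof.
move=> [e_timelike e0_gt0] /Xc_minkR[x2E xy_eq0] y2_lt0.
rewrite det3E; apply: sgr_timelike_pairing => //.
have := minkR_cross (reV z) (imV z); rewrite xy_eq0 expr0n subr0 /minkR => ->.
rewrite /minkR in y2_lt0 x2E *.
nra.
Qed.

Lemma VminusE (y : 'rV[R]_3) : Vminus y <-> 0 < minkR y y /\ y 0 0 < 0.
Proof. by rewrite /Vminus /Vplus /minkR /= !mxE !mulrNN oppr_gt0. Qed.

Lemma Tplus_zmap (w : C2 R) : (w.1 : R[i]) != w.2 -> Tplus (zmap w) <-> tau false true w.
Proof.
move=> lm; rewrite /tau /sgn /= mulN1r oppr_gt0 mul1r.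
have cone := future_cone_iff (cdist2_gt0 lm) (mink_imV_zmap lm) (imV_zmap01 lm).
split=> [[_ /cone //]|/cone y_future]; split=> //; exact: Xc_zmap.
Qed.

Lemma Tminus_zmap (w : C2 R) : (w.1 : R[i]) != w.2 -> Tminus (zmap w) <-> tau true false w.
Proof.
move=> lm; rewrite /tau /sgn /= mulN1r oppr_gt0 mul1r.
have cone := past_cone_iff (cdist2_gt0 lm) (mink_imV_zmap lm) (imV_zmap01 lm).
split=> [[_ /VminusE/cone //]|/cone y_past]; split; [exact: Xc_zmap | exact/VminusE].
Qed.

Lemma sqnorm1_gt0 (l : R[i]) : 0 < 1 + Re l ^+ 2 + Im l ^+ 2.
Proof. by rewrite -addrA ltr_pwDl ?addr_ge0 ?sqr_ge0. Qed.

Lemma Tleft_zmap (e : 'rV[R]_3) (w : C2 R) : Vplus e -> (w.1 : R[i]) != w.2 ->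
  Tleft e (zmap w) <-> tau true true w.
Proof.
move=> he lm; rewrite /tau /sgn /= !mul1r.
have space := spacelike_iff (cdist2_gt0 lm) (sqnorm1_gt0 w.2) (sqnorm1_gt0 w.1)
  (mink_imV_zmap lm) (cross_zmap0 lm).
have sg_det := sgr_det3_Xc he (Xc_zmap lm).
split=> [[_ [y2_lt0]]|/space[y2_lt0 n_gt0]].
  by rewrite sg_det // => /eqP; rewrite sgr_cp0 => n_gt0; apply/space.
by split; [exact: Xc_zmap | split=> //; apply/eqP; rewrite sg_det // sgr_cp0].
Qed.

Lemma Tright_zmap (e : 'rV[R]_3) (w : C2 R) : Vplus e -> (w.1 : R[i]) != w.2 ->
  Tright e (zmap w) <-> tau false false w.
Proof.
move=> he lm; rewrite /tau /sgn /= !mulN1r !oppr_gt0.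
have space := spacelike_neg_iff (cdist2_gt0 lm) (sqnorm1_gt0 w.2) (sqnorm1_gt0 w.1)
  (mink_imV_zmap lm) (cross_zmap0 lm).
have sg_det := sgr_det3_Xc he (Xc_zmap lm).
split=> [[_ [y2_lt0]]|/space[y2_lt0 n_lt0]].
  by rewrite sg_det // => /eqP; rewrite sgr_cp0 => n_lt0; apply/space.
by split; [exact: Xc_zmap | split=> //; apply/eqP; rewrite sg_det // sgr_cp0].
Qed.

Lemma open_sgn_gt0 (b : bool) : open [set x : R | 0 < sgn R b * x].
Proof.
case: b; rewrite /sgn.
  by under eq_set do rewrite mul1r; exact: open_gt.
by under eq_set do rewrite mulN1r oppr_gt0; exact: open_lt.
Qed.

Lemma open_tau (eps eps' : bool) : open (@tau R eps eps').
Proof.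
apply: openI.
  apply: (@open_comp _ _ (fun w : C2 R => Im w.1) [set x | 0 < sgn R eps * x]);
    last exact: open_sgn_gt0.
  move=> w _; apply: continuous_comp; last exact: continuous_Im.
  exact/differentiable_continuous/differentiable_fst.
apply: (@open_comp _ _ (fun w : C2 R => Im w.2) [set x | 0 < sgn R eps' * x]);
  last exact: open_sgn_gt0.
move=> w _; apply: continuous_comp; last exact: continuous_Im.
exact/differentiable_continuous/differentiable_snd.
Qed.

Lemma open_tau_setD_delta (eps eps' : bool) : open (@tau R eps eps' `\` @delta R).
Proof.
apply: openI; first exact: open_tau.
change (open (~` @delta R)).
have -> : ~` @delta R = (fun w : C2 R => (w.1 : CC R) - w.2) @^-1` [set x | x != 0].
  by apply/seteqP; split => w /=; rewrite subr_eq0 => /eqP.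
apply: open_comp (open_neq_normed _) => w _; apply: differentiable_continuous.
exact: differentiableB (differentiable_fst _) (differentiable_snd _).
Qed.

Lemma tau_setD_delta (eps eps' : bool) :
  eps != eps' -> @tau R eps eps' `\` @delta R = @tau R eps eps'.
Proof.
move=> eps_neq; apply/seteqP; split=> [w [] //|w [h1 h2]]; split=> // lm.
move: h1 h2; rewrite lm /sgn.
by case: eps eps' eps_neq => -[] //= _;
  rewrite mulN1r oppr_gt0 mul1r => /lt_trans lt /lt; rewrite ltxx.
Qed.

Lemma differentiable_zmap (w : C2 R) : (w.1 : R[i]) != w.2 -> differentiable (@zmap R) w.
Proof.
move=> lm.
have d1 : differentiable (fun w : C2 R => w.1) w by exact: differentiable_fst.
have d2 : differentiable (fun w : C2 R => w.2) w by exact: differentiable_snd.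
have lm_neq0 : (w.1 : CC R) - w.2 != 0 by rewrite subr_eq0.
have dV : differentiable (fun w : C2 R => ((w.1 : CC R) - w.2)^-1) w.
  exact: differentiableV (differentiableB d1 d2) lm_neq0.
rewrite /zmap; apply: differentiable_pair; first apply: differentiable_pair.
- exact: differentiableM (differentiableD (differentiable_cst _ _) (differentiableM d1 d2)) dV.
- exact: differentiableM (differentiableB (differentiable_cst _ _) (differentiableM d1 d2)) dV.
- exact: differentiableM (differentiableD d1 d2) dV.
Qed.

Lemma differentiable_zinv (z : C3 R) : c2 z - 1 != 0 -> c2 z + 1 != 0 ->
  differentiable (@zinv R) z.
Proof.
move=> p_neq0 q_neq0.
have d0 : differentiable (fun z : C3 R => (c0 z : CC R)) z.
  exact: differentiable_comp (differentiable_fst _) (differentiable_fst _).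
have d1 : differentiable (fun z : C3 R => (c1 z : CC R)) z.
  exact: differentiable_comp (differentiable_fst _) (differentiable_snd _).
have d2 : differentiable (fun z : C3 R => (c2 z : CC R)) z by exact: differentiable_snd.
have da : differentiable (fun z : C3 R => (c0 z : CC R) - c1 z) z by exact: differentiableB.
have dc := differentiable_cst (1 : CC R) z.
rewrite /zinv; apply: differentiable_pair.
  exact: differentiableM da (differentiableV (differentiableB d2 dc) p_neq0).
exact: differentiableM da (differentiableV (differentiableD d2 dc) q_neq0).
Qed.

Lemma open_c2_neq_pm1 : open [set u : C3 R | c2 u - 1 != 0 /\ c2 u + 1 != 0].
Proof.
have d2 u : differentiable (fun z : C3 R => (c2 z : CC R)) u by exact: differentiable_snd.
apply: openI.
  apply: (@open_comp _ _ (fun u : C3 R => (c2 u : CC R) - 1) [set x | x != 0]);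
    last exact: open_neq_normed.
  by move=> u _; apply/differentiable_continuous/differentiableB.
apply: (@open_comp _ _ (fun u : C3 R => (c2 u : CC R) + 1) [set x | x != 0]);
  last exact: open_neq_normed.
by move=> u _; apply/differentiable_continuous/differentiableD.
Qed.

Lemma zinv_neq_diag (z : C3 R) : c0 z - c1 z != 0 -> c2 z - 1 != 0 -> c2 z + 1 != 0 ->
  ((zinv z).1 : R[i]) != (zinv z).2.
Proof.
case: z => [[z0 z1] z2]; rewrite /zinv /c0 /c1 /c2 /= => a_neq0 p_neq0 q_neq0.
have two_neq0 : (2 : R[i]) != 0 by rewrite pnatr_eq0.
rewrite -subr_eq0 (_ : _ - _ = 2 * (z0 - z1) / ((z2 - 1) * (z2 + 1))).
  by rewrite !mulf_neq0 ?invr_eq0 ?mulf_neq0.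
by field; rewrite p_neq0 q_neq0.
Qed.

Lemma biholomorphic_zmap (eps eps' : bool) (E : set (C3 R)) :
  (forall w, (w.1 : R[i]) != w.2 -> E (zmap w) <-> @tau R eps eps' w) ->
  (forall z, E z -> Xc z /\ minkR (imV z) (imV z) != 0) ->
  biholomorphic (@tau R eps eps' `\` @delta R) E (@zmap R) (@zinv R).
Proof.
move=> Emem Enondeg.
have neq0_of_tau b (x : R[i]) : 0 < sgn R b * Im x -> x != 0.
  by apply: contraTneq => ->; rewrite mulr0 ltxx.
split.
- by move=> w [tau_w /eqP lm]; apply/Emem.
- move=> z Ez; have [zXc y_nonnull] := Enondeg z Ez.
  have [a_neq0 s_neq0 p_neq0 q_neq0] := Xc_neq0 zXc y_nonnull.
  have zK := zmap_zinv zXc s_neq0 p_neq0 q_neq0.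
  have lm := zinv_neq_diag a_neq0 p_neq0 q_neq0.
  by split=> //; split; [apply/Emem; rewrite ?zK | apply/eqP].
- move=> w [[tau1 tau2] /eqP lm].
  exact: zinv_zmap lm (neq0_of_tau _ _ tau1) (neq0_of_tau _ _ tau2).
- split; first exact: open_tau_setD_delta.
  by move=> w [_ /eqP lm]; exact: differentiable_zmap.
- move=> z /Enondeg[zXc y_nonnull]; have [_ _ p_neq0 q_neq0] := Xc_neq0 zXc y_nonnull.
  exists [set u | c2 u - 1 != 0 /\ c2 u + 1 != 0]; split=> //; first exact: open_c2_neq_pm1.
  by exists (@zinv R); split=> // u [p_neq0' q_neq0']; exact: differentiable_zinv.
Qed.

Lemma tubes_nondeg (e : 'rV[R]_3) (z : C3 R) :
  Tplus z \/ Tminus z \/ Tleft e z \/ Tright e z -> Xc z /\ minkR (imV z) (imV z) != 0.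
Proof.
by case=> [[? [/lt0r_neq0 ? _]]|[[? /VminusE[/lt0r_neq0 ? _]]|
            [[? [/ltr0_neq0 ? _]]|[? [/ltr0_neq0 ? _]]]]].
Qed.
End Tubes.

Unset Implicit Arguments. Set Strict Implicit.

Theorem proposition7 (R : realType) (e : 'rV[R]_3) (he : Vplus e) :
  (* the two expressions of the inverse agree on X^(c) images *)
  (forall z : C3 R, (@Tplus R z \/ @Tminus R z \/ Tleft e z \/ Tright e z) ->
     zinv z = ((((c2 z + 1) / (c0 z + c1 z) : R[i]) : CC R),
               (((c2 z - 1) / (c0 z + c1 z) : R[i]) : CC R))) /\
  [/\ biholomorphic (@tau R false true) (@Tplus R) (@zmap R) (@zinv R),
      biholomorphic (@tau R true false) (@Tminus R) (@zmap R) (@zinv R),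
      biholomorphic (@tau R true true `\` @delta R) (Tleft e) (@zmap R) (@zinv R) &
      biholomorphic (@tau R false false `\` @delta R) (Tright e) (@zmap R) (@zinv R)].
Proof.
have nondeg := @tubes_nondeg R e.
split; first by move=> z /nondeg[]; exact: zinvE.
split.
- rewrite -tau_setD_delta //; apply: biholomorphic_zmap => [w|z Tz].
    exact: Tplus_zmap.
  by apply: nondeg; left.
- rewrite -tau_setD_delta //; apply: biholomorphic_zmap => [w|z Tz].
    exact: Tminus_zmap.
  by apply: nondeg; right; left.
- apply: biholomorphic_zmap => [w|z Tz]; first exact: Tleft_zmap.
  by apply: nondeg; do 2 right; left.
- apply: biholomorphic_zmap => [w|z Tz]; first exact: Tright_zmap.
  by apply: nondeg; do 3 right.
Qed.
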